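(* Let $P=\langle p_1,\dots,p_n\rangle$ be a set of points in convex position. For any three points $p_i,p_l,p_j\in P$ ordered counterclockwise on the convex hull of $P$, and any two points $p,q$ with $p\in P(i,l)$, $q\in P(l,j)$, and $p,q\notin D(p_i,p_l,p_j)$, we have $$|pq|\ge\min\{|pp_i|,|pp_l|,|p_ip_j|,|p_lp_j|,|p_lp_i|,|qp_l|,|qp_j|\}.$$
   Context: $P$ is in convex position (every point is a hull vertex), no three points collinear, no four cocircular, listed counterclockwise along the hull. $P(i,l)$ denotes the points of $P$ strictly between $p_i$ and $p_l$ moving counterclockwise from $p_i$ to $p_l$. $D(p_i,p_l,p_j)$ is the disk whose boundary circle passes through $p_i,p_l,p_j$. $|xy|$ is Euclidean distance. *)

From mathcomp Require Import all_boot all_order all_algebra.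
Set Implicit Arguments. Unset Strict Implicit. Unset Printing Implicit Defensive.
Import Order.TTheory GRing.Theory Num.Theory.
Local Open Scope ring_scope.

Definition pt (R : rcfType) := (R * R)%type.

Definition dist (R : rcfType) (x y : pt R) : R :=
  Num.sqrt ((x.1 - y.1) ^+ 2 + (x.2 - y.2) ^+ 2).

(* Orientation determinant: > 0 iff a, b, c make a counterclockwise turn. *)
Definition orient (R : rcfType) (a b c : pt R) : R :=
  (b.1 - a.1) * (c.2 - a.2) - (b.2 - a.2) * (c.1 - a.1).

(* p_0, ..., p_{n-1} are in convex position, no three collinear, listed
   counterclockwise along the hull: every index-ordered triple is a
   strict counterclockwise turn. *)
Definition convex_ccw (R : rcfType) (n : nat) (P : 'I_n -> pt R) : Prop :=
  forall a b c : 'I_n, (a < b)%N -> (b < c)%N -> 0 < orient (P a) (P b) (P c).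

Definition cocircular (R : rcfType) (a b c d : pt R) : Prop :=
  exists o : pt R, dist o a = dist o b /\ dist o a = dist o c /\ dist o a = dist o d.

Definition no_four_cocircular (R : rcfType) (n : nat) (P : 'I_n -> pt R) : Prop :=
  forall a b c d : 'I_n, uniq [:: a; b; c; d] ->
    ~ cocircular (P a) (P b) (P c) (P d).

Definition in_disk (R : rcfType) (a b c x : pt R) : Prop :=
  exists o : pt R, dist o a = dist o b /\ dist o a = dist o c /\ dist o x <= dist o a.

(* cbetween i k l : index k is strictly between i and l when moving
   counterclockwise (cyclically increasing indices) from i to l,
   i.e. p_k \in P(i,l). *)
Definition cbetween (n : nat) (i k l : 'I_n) : bool :=
  if (i < l)%N then (i < k < l)%N else (i < k)%N || (k < l)%N.

From mathcomp Require Import all_boot all_order all_algebra.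
From mathcomp Require Import ring lra zify.
Import Order.TTheory GRing.Theory Num.Theory.
Set Implicit Arguments. Unset Strict Implicit.
Local Open Scope ring_scope.

(* If the angle of the triangle p p_l q at p_l is not acute, then |pq| >= |p p_l|.
   Otherwise, the points appear in the cyclic order p_i, p, p_l, q, p_j, and since
   p and q lie outside the circle through p_i, p_l, p_j, both p_i and p_j lie inside
   the circle through p, p_l, q, on the other side of the chord pq than p_l.  By the
   inscribed angle theorem they see pq under an obtuse angle, so they lie in the
   disk with diameter pq, and |p_i p_j| <= |pq|. *)

Section Plane.
Variable R : rcfType.
Implicit Types a b c d i j l o x y : pt R.

Definition sqdist x y : R := (x.1 - y.1) ^+ 2 + (x.2 - y.2) ^+ 2.

Definition dotc a b c : R := (a.1 - c.1) * (b.1 - c.1) + (a.2 - c.2) * (b.2 - c.2).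

(* The incircle determinant: for [0 < orient a b c] it is positive iff [d] lies
   strictly inside the circle through [a], [b], [c]. *)
Definition incircle a b c d : R :=
  let A1 := a.1 - d.1 in let A2 := a.2 - d.2 in let Aw := A1 ^+ 2 + A2 ^+ 2 in
  let B1 := b.1 - d.1 in let B2 := b.2 - d.2 in let Bw := B1 ^+ 2 + B2 ^+ 2 in
  let C1 := c.1 - d.1 in let C2 := c.2 - d.2 in let Cw := C1 ^+ 2 + C2 ^+ 2 in
  A1 * (B2 * Cw - Bw * C2) - A2 * (B1 * Cw - Bw * C1) + Aw * (B1 * C2 - B2 * C1).

Definition circumcenter a b c : pt R :=
  let p1 := b.1 - a.1 in let p2 := b.2 - a.2 in
  let q1 := c.1 - a.1 in let q2 := c.2 - a.2 in
  let d := 2 * orient a b c in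
  (a.1 + (q2 * (p1 ^+ 2 + p2 ^+ 2) - p2 * (q1 ^+ 2 + q2 ^+ 2)) / d,
   a.2 + (p1 * (q1 ^+ 2 + q2 ^+ 2) - q1 * (p1 ^+ 2 + p2 ^+ 2)) / d).

Lemma orient_rotl a b c : orient a b c = orient b c a.
Proof. by rewrite /orient; ring. Qed.

Lemma orient_swap a b c : orient a c b = - orient a b c.
Proof. by rewrite /orient; ring. Qed.

Lemma ler_dist x y o d : sqdist x y <= sqdist o d -> dist x y <= dist o d.
Proof. exact: ler_wsqrtr. Qed.

Lemma sqdist_circumcenter a b c x : orient a b c != 0 ->
  sqdist (circumcenter a b c) x - sqdist (circumcenter a b c) a
  = - incircle a b c x / orient a b c.
Proof.
by rewrite /orient => h; rewrite /sqdist /circumcenter /incircle /orient /=; field.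
Qed.

Lemma incircle_vertex2 a b c : incircle a b c b = 0.
Proof. by rewrite /incircle; ring. Qed.

Lemma incircle_vertex3 a b c : incircle a b c c = 0.
Proof. by rewrite /incircle; ring. Qed.

Lemma in_disk_incircle a b c x :
  0 < orient a b c -> 0 <= incircle a b c x -> in_disk a b c x.
Proof.
move=> habc hx; have habc0 : orient a b c != 0 by rewrite gt_eqF.
have on_circle y :
    incircle a b c y = 0 -> dist (circumcenter a b c) a = dist (circumcenter a b c) y.
  move=> hy; congr Num.sqrt; apply/eqP; rewrite eq_sym -subr_eq0.
  by rewrite [_ - _]sqdist_circumcenter // hy oppr0 mul0r.
exists (circumcenter a b c); split; [exact/on_circle/incircle_vertex2|split].
  exact/on_circle/incircle_vertex3.
apply: ler_dist; rewrite -subr_le0 sqdist_circumcenter // mulNr oppr_le0.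
by rewrite divr_ge0 // ltW.
Qed.

Lemma incircle_lt0 a b c x :
  0 < orient a b c -> ~ in_disk a b c x -> incircle a b c x < 0.
Proof.
by move=> habc hx; rewrite ltNge; apply/negP => /(in_disk_incircle habc).
Qed.

(* Grassmann-Plucker relations between the orientations of the points lifted to
   the paraboloid z = x^2 + y^2, of which [incircle] is a 4 x 4 determinant. *)
Lemma incircle_exchange_l i a l b j :
  orient i l j * incircle a l b i
  = orient i l a * incircle i l j b - orient i l b * incircle i l j a.
Proof. by rewrite /orient /incircle /=; ring. Qed.

Lemma incircle_exchange_r i a l b j :
  orient l j i * incircle a l b j
  = orient l j b * incircle i l j a - orient l j a * incircle i l j b.
Proof. by rewrite /orient /incircle /=; ring. Qed.

Lemma incircle_dotc a l b x :
  incircle a l b x = - (dotc a b l * orient a b x + dotc a b x * orient a l b).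
Proof. by rewrite /orient /incircle /dotc /=; ring. Qed.

Lemma incircle_gt0_l i a l b j :
  0 < orient i l j -> 0 < orient i a l -> 0 < orient i l b ->
  incircle i l j a < 0 -> incircle i l j b < 0 -> 0 < incircle a l b i.
Proof.
move=> hilj hial hilb ha hb; rewrite -(pmulr_rgt0 _ hilj) incircle_exchange_l.
have ha' : 0 < orient i l b * - incircle i l j a by rewrite mulr_gt0 ?oppr_gt0.
have hb' : 0 < orient i a l * - incircle i l j b by rewrite mulr_gt0 ?oppr_gt0.
rewrite (orient_swap i a l); lra.
Qed.

Lemma incircle_gt0_r i a l b j :
  0 < orient i l j -> 0 < orient l j a -> 0 < orient l b j ->
  incircle i l j a < 0 -> incircle i l j b < 0 -> 0 < incircle a l b j.
Proof.
move=> hilj hlja hlbj ha hb; rewrite orient_rotl in hilj.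
rewrite -(pmulr_rgt0 _ hilj) incircle_exchange_r.
have hljb : orient l j b < 0 by rewrite -oppr_gt0 -orient_swap.
have ha' : 0 < orient l j b * incircle i l j a by rewrite -mulrNN mulr_gt0 ?oppr_gt0.
have hb' : 0 < orient l j a * - incircle i l j b by rewrite mulr_gt0 ?oppr_gt0.
lra.
Qed.

(* Inscribed angles on the two sides of the chord [ab] are supplementary. *)
Lemma dotc_lt0_incircle a l b x :
  0 < dotc a b l -> 0 < orient a b x -> 0 < orient a l b ->
  0 < incircle a l b x -> dotc a b x < 0.
Proof.
move=> hl habx halb; rewrite incircle_dotc oppr_gt0 => hx.
have : dotc a b x * orient a l b < 0 by nra.
by rewrite pmulr_llt0.
Qed.

Lemma sqdist_le_dotc_le0 a b c : dotc a b c <= 0 -> sqdist a c <= sqdist a b.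
Proof.
move=> hc; have hbc : 0 <= sqdist b c by rewrite addr_ge0 ?sqr_ge0.
have -> : sqdist a b = sqdist a c + sqdist b c - 2 * dotc a b c.
  by rewrite /sqdist /dotc; ring.
lra.
Qed.

Lemma sqdist_le_dotc_lt0 a b x y :
  dotc a b x < 0 -> dotc a b y < 0 -> sqdist x y <= sqdist a b.
Proof.
move=> hx hy; pose m : pt R := (x.1 + y.1 - b.1, x.2 + y.2 - b.2).
have hm : 0 <= sqdist m a by rewrite addr_ge0 ?sqr_ge0.
have -> : sqdist x y = 2 * dotc a b x + 2 * dotc a b y + sqdist a b - sqdist m a.
  by rewrite /sqdist /dotc /=; ring.
lra.
Qed.

End Plane.

Definition cyclic_order (x y z : nat) : bool := [|| x < y < z, y < z < x | z < x < y]%N.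

Lemma cbetween_neq n (x y z : 'I_n) : cbetween x y z -> (x != y) && (y != z).
Proof. by rewrite /cbetween -!val_eqE /=; case: ifP; lia. Qed.

Lemma cbetween_cyclic_order n (x y z : 'I_n) :
  cbetween x y z -> x != z -> cyclic_order x y z.
Proof. by rewrite /cbetween /cyclic_order -val_eqE /=; case: ifP; lia. Qed.

Lemma orient_gt0_cyclic_order (R : rcfType) n (P : 'I_n -> pt R) (x y z : 'I_n) :
  convex_ccw P -> cyclic_order x y z -> 0 < orient (P x) (P y) (P z).
Proof.
move=> hP /or3P[/andP[hxy hyz]|/andP[hyz hzx]|/andP[hzx hxy]]; first exact: hP.
  by rewrite orient_rotl; apply: hP.
by rewrite -orient_rotl; apply: hP.
Qed.

Theorem lemma21 (R : rcfType) (n : nat) (P : 'I_n -> pt R)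
  (hconv : convex_ccw P) (hcoc : no_four_cocircular P)
  (i l j a b : 'I_n)
  (hij : i != j) (hilj : cbetween i l j)
  (ha : cbetween i a l) (hb : cbetween l b j)
  (hpa : ~ in_disk (P i) (P l) (P j) (P a))
  (hqb : ~ in_disk (P i) (P l) (P j) (P b)) :
  Num.min (dist (P a) (P i))
    (Num.min (dist (P a) (P l))
      (Num.min (dist (P i) (P j))
        (Num.min (dist (P l) (P j))
          (Num.min (dist (P l) (P i))
            (Num.min (dist (P b) (P l)) (dist (P b) (P j)))))))
  <= dist (P a) (P b).
Proof.
have /andP[hil hlj] := cbetween_neq hilj.
have := cbetween_cyclic_order hilj hij; have := cbetween_cyclic_order ha hil.
have := cbetween_cyclic_order hb hlj; rewrite /cyclic_order => c3 c2 c1.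
have pos (x y z : 'I_n) :
    [|| x < y < z, y < z < x | z < x < y]%N -> 0 < orient (P x) (P y) (P z).
  exact: orient_gt0_cyclic_order.
have o_ilj : 0 < orient (P i) (P l) (P j) by apply: pos; lia.
have hia := incircle_lt0 o_ilj hpa; have hib := incircle_lt0 o_ilj hqb.
rewrite !ge_min; have [hl|hl] := lerP (dotc (P a) (P b) (P l)) 0.
  by rewrite (ler_dist (sqdist_le_dotc_le0 hl)) orbT.
have o_alb : 0 < orient (P a) (P l) (P b) by apply: pos; lia.
have hi : dotc (P a) (P b) (P i) < 0.
  apply: dotc_lt0_incircle hl _ o_alb _; first by apply: pos; lia.
  by apply: incircle_gt0_l hia hib => //; apply: pos; lia.
have hj : dotc (P a) (P b) (P j) < 0.
  apply: dotc_lt0_incircle hl _ o_alb _; first by apply: pos; lia.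
  by apply: incircle_gt0_r hia hib => //; apply: pos; lia.
by rewrite (ler_dist (sqdist_le_dotc_lt0 hi hj)) !orbT.
Qed.
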